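(* The hyperplane arrangement $\mathrm{I}(\mathrm{A}_1\oplus\mathfrak{g}_2,\mathbf{R})$ with $\mathbf{R}=(\mathbf{2},\mathbf{7})$ has exactly four chambers inside the open dual fundamental Weyl chamber, and their adjacency graph is a chain $1-2-3-4$. With respect to the sign vector $(\varpi^{(\mathbf{2},\mathbf{7})}_5,\varpi^{(\mathbf{2},\mathbf{7})}_6,\varpi^{(\mathbf{2},\mathbf{7})}_7)$, the chambers are: chamber 1: signs $(+,+,+)$, explicitly $0<\tfrac{1}{2}\phi_2<\phi_1<\tfrac{2}{3}\phi_2,\ \phi_1<\psi_1$; chamber 2: signs $(+,+,-)$, explicitly $0<\tfrac{1}{2}\phi_2<\phi_1<\tfrac{2}{3}\phi_2,\ \phi_2-\phi_1<\psi_1<\phi_1$; chamber 3: signs $(+,-,-)$, explicitly $0<\tfrac{3}{2}\phi_1<\phi_2<2\phi_1,\ 2\phi_1-\phi_2<\psi_1<\phi_2-\phi_1$; chamber 4: signs $(-,-,-)$, explicitly $0<\tfrac{3}{2}\phi_1<\phi_2<2\phi_1,\ 0<\psi_1<2\phi_1-\phi_2$. The wall between chamber $i$ and chamber $i+1$ ($i=1,2,3$) is the hyperplane orthogonal to the weight $\varpi^{(\mathbf{2},\mathbf{7})}_{8-i}$.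
   Context: Consider the semi-simple Lie algebra $\mathfrak{g}=\mathrm{A}_1\oplus\mathfrak{g}_2$ and the bifundamental representation $(\mathbf{2},\mathbf{7})$. Weights are written $(a;b,c)$ in the basis of fundamental weights, with $(a)$ a weight of $\mathrm{A}_1$ and $(b,c)$ a weight of $\mathfrak{g}_2$; a coroot vector is $\phi=(\psi_1;\phi_1,\phi_2)$ in the basis of fundamental coroots, and a weight acts on it by the natural pairing. The open dual fundamental Weyl chamber is $\psi_1>0$, $2\phi_1-\phi_2>0$, $-3\phi_1+2\phi_2>0$. The hyperplane arrangement $\mathrm{I}(\mathfrak{g},\mathbf{R})$ consists of the hyperplanes orthogonal (kernels) to the weights of $\mathbf{R}$, restricted to this open dual fundamental Weyl chamber. The relevant weights of $(\mathbf{2},\mathbf{7})$ are $\varpi^{(\mathbf{2},\mathbf{7})}_5=(1;-2,1)$, $\varpi^{(\mathbf{2},\mathbf{7})}_6=(1;1,-1)$, $\varpi^{(\mathbf{2},\mathbf{7})}_7=(1;-1,0)$; these are the only weights of $(\mathbf{2},\mathbf{7})$ whose hyperplanes meet the interior of the Weyl chamber. Adding the summands $(\mathbf{3},\mathbf{1}),(\mathbf{1},\mathbf{14}),(\mathbf{2},\mathbf{1}),(\mathbf{1},\mathbf{7})$ to $\mathbf{R}$ does not change the chamber structure. *)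

From Stdlib Require Import Reals Lra ZArith List.
Open Scope R_scope.

(* A coroot vector phi = (psi1; phi1, phi2) in the basis of fundamental coroots. *)
Record coroot := Coroot { psi1 : R; phi1 : R; phi2 : R }.

(* A weight (a; b, c) in the basis of fundamental weights of A1 (+) g2. *)
Definition weight := (Z * Z * Z)%type.

Definition pairing (w : weight) (x : coroot) : R :=
  let '(a, b, c) := w in IZR a * psi1 x + IZR b * phi1 x + IZR c * phi2 x.

Definition wneg (w : weight) : weight :=
  let '(a, b, c) := w in (- a, - b, - c)%Z.

(* Weights of the 7 of g2 (fundamental weight basis, Cartan matrix
   [[2,-1],[-3,2]], simple roots (2,-1) and (-3,2)). *)
Definition weights_g2_7 : list (Z * Z) :=
  ((1, 0) :: (-1, 1) :: (2, -1) :: (0, 0) :: (-2, 1) :: (1, -1) :: (-1, 0) :: nil)%Z.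

Definition weights_2_7 : list weight :=
  map (fun bc => (1%Z, fst bc, snd bc)) weights_g2_7 ++
  map (fun bc => ((-1)%Z, fst bc, snd bc)) weights_g2_7.

Definition varpi5 : weight := (1, -2, 1)%Z.
Definition varpi6 : weight := (1, 1, -1)%Z.
Definition varpi7 : weight := (1, -1, 0)%Z.

Definition in_weyl (x : coroot) : Prop :=
  0 < psi1 x /\ 0 < 2 * phi1 x - phi2 x /\ 0 < -3 * phi1 x + 2 * phi2 x.

Definition generic (x : coroot) : Prop :=
  forall w, In w weights_2_7 -> pairing w x <> 0.

Definition region (x : coroot) : Prop := in_weyl x /\ generic x.

Definition same_side (x y : coroot) : Prop :=
  forall w, In w weights_2_7 -> (0 < pairing w x <-> 0 < pairing w y).

Definition is_chamber (S : coroot -> Prop) : Prop :=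
  exists x, region x /\ forall y, S y <-> (region y /\ same_side x y).

Definition set_eq (S T : coroot -> Prop) : Prop := forall x, S x <-> T x.

Definition vadd (x v : coroot) (t : R) : coroot :=
  Coroot (psi1 x + t * psi1 v) (phi1 x + t * phi1 v) (phi2 x + t * phi2 v).

Definition adjacent_via (w : weight) (K K' : coroot -> Prop) : Prop :=
  exists p v, in_weyl p /\ pairing w p = 0 /\
    (forall w', In w' weights_2_7 -> pairing w' p = 0 -> w' = w \/ w' = wneg w) /\
    exists eps, 0 < eps /\
      forall t, 0 < t < eps -> K (vadd p v t) /\ K' (vadd p v (- t)).

Definition adjacent (K K' : coroot -> Prop) : Prop :=
  exists w, In w weights_2_7 /\ adjacent_via w K K'.

Definition chamberK (i : nat) (x : coroot) : Prop :=
  let ps := psi1 x in let a := phi1 x in let b := phi2 x in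
  match i with
  | 1%nat => 0 < b / 2 /\ b / 2 < a /\ a < 2 / 3 * b /\ a < ps
  | 2%nat => 0 < b / 2 /\ b / 2 < a /\ a < 2 / 3 * b /\ b - a < ps /\ ps < a
  | 3%nat => 0 < 3 / 2 * a /\ 3 / 2 * a < b /\ b < 2 * a /\
             2 * a - b < ps /\ ps < b - a
  | 4%nat => 0 < 3 / 2 * a /\ 3 / 2 * a < b /\ b < 2 * a /\
             0 < ps /\ ps < 2 * a - b
  | _ => False
  end.

(* sign vector (true = +) w.r.t. (varpi5, varpi6, varpi7) *)
Definition chamber_signs (i : nat) : bool * bool * bool :=
  match i with
  | 1%nat => (true, true, true)
  | 2%nat => (true, true, false)
  | 3%nat => (true, false, false)
  | _ => (false, false, false)
  end.

Definition has_sign (b : bool) (r : R) : Prop := if b then 0 < r else r < 0.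

Definition wall (i : nat) : weight :=
  match i with 1%nat => varpi7 | 2%nat => varpi6 | _ => varpi5 end.

(* On the dual Weyl chamber the three relevant weights are strictly ordered,
   [varpi7 < varpi6 < varpi5], because their differences [(0;2,-1)] and
   [(0;-3,2)] are the simple roots of g2; every other weight of (2,7) has a
   constant sign there.  Hence the sign vector of a generic point is monotone:
   one of (+++), (++-), (+--), (---), which gives the four chambers.  The base
   point of a wall crossing lies on every hyperplane separating the two
   chambers, and through a point of the Weyl chamber passes at most one
   relevant hyperplane; so only chambers whose sign vectors differ in one entry
   are adjacent, across the hyperplane where that sign flips. *)
From Stdlib Require Import Reals ZArith List.
From Stdlib Require Import Lra Lia.
Open Scope R_scope.

Ltac solve_coords :=
  unfold chamberK, in_weyl, wall, vadd, pairing, varpi5, varpi6, varpi7 in *;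
  cbv zeta in *; cbn [psi1 phi1 phi2] in *; lra.

Ltac nat_cases i := destruct i as [|[|[|[|[|i]]]]]; try lia.

Lemma pairing_vadd w p v t : pairing w (vadd p v t) = pairing w p + t * pairing w v.
Proof. destruct w as [[a b] c]; unfold pairing, vadd; simpl; ring. Qed.

Lemma pairing_wneg w x : pairing (wneg w) x = - pairing w x.
Proof. destruct w as [[a b] c]; unfold pairing, wneg; rewrite !opp_IZR; ring. Qed.

Lemma wneg_involutive w : wneg (wneg w) = w.
Proof. destruct w as [[a b] c]; unfold wneg; rewrite !Z.opp_involutive; reflexivity. Qed.

Definition relevant (u : weight) : Prop := u = varpi5 \/ u = varpi6 \/ u = varpi7.

Lemma relevant_in_weights u : relevant u -> In u weights_2_7.
Proof. intros [-> | [-> | ->]]; simpl; tauto. Qed.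

Lemma wall_relevant k : relevant (wall k).
Proof. unfold relevant; nat_cases k; simpl wall; tauto. Qed.

Lemma weights_2_7_cases w : In w weights_2_7 ->
  (forall x, in_weyl x -> 0 < pairing w x) \/
  (forall x, in_weyl x -> pairing w x < 0) \/
  exists u, relevant u /\ (w = u \/ w = wneg u).
Proof.
  unfold weights_2_7, weights_g2_7; simpl.
  intros Hw; repeat destruct Hw as [<- | Hw]; [.. | contradiction];
    first
    [ left; intros x Hx; solve_coords
    | right; left; intros x Hx; solve_coords
    | do 2 right;
      first [ solve [exists varpi5; unfold relevant; auto]
            | solve [exists varpi6; unfold relevant; auto]
            | solve [exists varpi7; unfold relevant; auto] ] ].
Qed.

Lemma in_weyl_relevant_order x : in_weyl x ->
  pairing varpi7 x < pairing varpi6 x < pairing varpi5 x.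
Proof. intros Hx; split; solve_coords. Qed.

Lemma relevant_vanishing_unique u u' x : in_weyl x -> relevant u -> relevant u' ->
  pairing u x = 0 -> pairing u' x = 0 -> u = u'.
Proof.
  intros Hx Hu Hu' H H'; pose proof (in_weyl_relevant_order x Hx).
  destruct Hu as [-> | [-> | ->]], Hu' as [-> | [-> | ->]]; auto; lra.
Qed.

Definition has_signs (s : bool * bool * bool) (x : coroot) : Prop :=
  let '(s5, s6, s7) := s in
  has_sign s5 (pairing varpi5 x) /\ has_sign s6 (pairing varpi6 x) /\
  has_sign s7 (pairing varpi7 x).

Lemma has_signs_relevant s u : relevant u ->
  (forall x, has_signs s x -> 0 < pairing u x) \/
  (forall x, has_signs s x -> pairing u x < 0).
Proof.
  destruct s as [[s5 s6] s7]; intros [-> | [-> | ->]];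
    [destruct s5 | destruct s6 | destruct s7];
    [left | right | left | right | left | right];
    intros x Hx; cbn [has_signs has_sign] in Hx; tauto.
Qed.

Lemma has_signs_transfer s x y : has_signs s x ->
  (forall u, relevant u -> pairing u y <> 0 /\ (0 < pairing u x <-> 0 < pairing u y)) ->
  has_signs s y.
Proof.
  destruct s as [[s5 s6] s7]; intros (H5 & H6 & H7) Hagree.
  destruct (Hagree varpi5), (Hagree varpi6), (Hagree varpi7); unfold relevant; auto.
  destruct s5, s6, s7; cbn [has_signs has_sign] in *; repeat split; lra.
Qed.

Lemma has_sign_unique b b' r : has_sign b r -> has_sign b' r -> b = b'.
Proof. destruct b, b'; simpl; auto; lra. Qed.

Lemma has_signs_unique s s' x : has_signs s x -> has_signs s' x -> s = s'.
Proof.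
  destruct s as [[a5 a6] a7], s' as [[b5 b6] b7].
  intros (H5 & H6 & H7) (H5' & H6' & H7').
  rewrite (has_sign_unique _ _ _ H5 H5'), (has_sign_unique _ _ _ H6 H6'),
    (has_sign_unique _ _ _ H7 H7').
  reflexivity.
Qed.

Lemma chamberK_iff i x : (1 <= i <= 4)%nat ->
  chamberK i x <-> in_weyl x /\ has_signs (chamber_signs i) x.
Proof. intros Hi; nat_cases i; simpl; split; intros H; repeat split; solve_coords. Qed.

Lemma chamberK_inhabited i : (1 <= i <= 4)%nat -> exists x, chamberK i x.
Proof.
  intros Hi; nat_cases i;
    [exists (Coroot 5 4 7) | exists (Coroot (7/2) 4 7)
    | exists (Coroot 2 4 7) | exists (Coroot (1/2) 4 7)]; solve_coords.
Qed.

Lemma chamberK_disjoint i j x : (1 <= i <= 4)%nat -> (1 <= j <= 4)%nat ->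
  chamberK i x -> chamberK j x -> i = j.
Proof.
  intros Hi Hj Hxi Hxj.
  apply chamberK_iff in Hxi as [_ Hsi]; [|assumption].
  apply chamberK_iff in Hxj as [_ Hsj]; [|assumption].
  pose proof (has_signs_unique _ _ _ Hsi Hsj) as Hsigns.
  nat_cases i; nat_cases j; simpl in Hsigns; congruence.
Qed.

Lemma chamberK_sign_constant i w : (1 <= i <= 4)%nat -> In w weights_2_7 ->
  (forall x, chamberK i x -> 0 < pairing w x) \/
  (forall x, chamberK i x -> pairing w x < 0).
Proof.
  intros Hi Hw.
  destruct (weights_2_7_cases w Hw) as [Hpos | [Hneg | (u & Hu & Hwu)]].
  - left; intros x Hx; apply Hpos, (chamberK_iff i x Hi), Hx.
  - right; intros x Hx; apply Hneg, (chamberK_iff i x Hi), Hx.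
  - destruct (has_signs_relevant (chamber_signs i) u Hu) as [Hs | Hs];
      destruct Hwu as [-> | ->]; [left | right | right | left]; intros x Hx;
      apply chamberK_iff in Hx as [_ Hx]; auto; rewrite pairing_wneg;
      specialize (Hs x Hx); lra.
Qed.

Lemma chamberK_region i x : (1 <= i <= 4)%nat -> chamberK i x -> region x.
Proof.
  intros Hi Hx; split; [apply (chamberK_iff i x Hi), Hx|].
  intros w Hw; destruct (chamberK_sign_constant i w Hi Hw) as [Hs | Hs];
    specialize (Hs x Hx); lra.
Qed.

Lemma region_chamberK x : region x -> exists i, (1 <= i <= 4)%nat /\ chamberK i x.
Proof.
  intros [Hx Hgen].
  pose proof (in_weyl_relevant_order x Hx) as Horder.
  assert (Hnz : forall u, relevant u -> pairing u x <> 0)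
    by (intros u Hu; apply Hgen, relevant_in_weights, Hu).
  pose proof (Hnz varpi5 ltac:(unfold relevant; auto)) as H5.
  pose proof (Hnz varpi6 ltac:(unfold relevant; auto)) as H6.
  pose proof (Hnz varpi7 ltac:(unfold relevant; auto)) as H7.
  enough (Hs : exists i, (1 <= i <= 4)%nat /\ has_signs (chamber_signs i) x).
  { destruct Hs as (i & Hi & Hs); exists i; split; [|apply chamberK_iff]; auto. }
  destruct (Rlt_dec 0 (pairing varpi7 x)); [exists 1%nat | ].
  2: destruct (Rlt_dec 0 (pairing varpi6 x)); [exists 2%nat | ].
  3: destruct (Rlt_dec 0 (pairing varpi5 x)); [exists 3%nat | exists 4%nat].
  all: split; [lia|]; cbn [has_signs chamber_signs has_sign]; repeat split; lra.
Qed.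

Lemma chamberK_same_side i x y : (1 <= i <= 4)%nat -> chamberK i x ->
  chamberK i y <-> region y /\ same_side x y.
Proof.
  intros Hi Hx; split.
  - intros Hy; split; [exact (chamberK_region i y Hi Hy)|].
    intros w Hw; destruct (chamberK_sign_constant i w Hi Hw) as [Hs | Hs];
      pose proof (Hs x Hx); pose proof (Hs y Hy); lra.
  - intros [[Hy Hgen] Hside].
    apply chamberK_iff in Hx as [_ Hx]; [|assumption].
    apply chamberK_iff; [assumption|]; split; [assumption|].
    apply (has_signs_transfer _ x); [assumption|].
    intros u Hu; apply relevant_in_weights in Hu.
    split; [apply Hgen | apply Hside]; assumption.
Qed.

Lemma is_chamber_iff S : is_chamber S <->
  exists i, (1 <= i <= 4)%nat /\ set_eq S (chamberK i).
Proof.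
  split.
  - intros (x & Hx & HS).
    destruct (region_chamberK x Hx) as (i & Hi & Hxi).
    exists i; split; [assumption|].
    intros y; rewrite HS; symmetry; apply chamberK_same_side; assumption.
  - intros (i & Hi & HS).
    destruct (chamberK_inhabited i Hi) as [x Hx].
    exists x; split; [exact (chamberK_region i x Hi Hx)|].
    intros y; rewrite (HS y); apply chamberK_same_side; assumption.
Qed.

Lemma linear_sign_change c d eps : 0 < eps ->
  (forall t, 0 < t < eps -> 0 < c + t * d /\ c - t * d < 0) -> c = 0.
Proof.
  intros Heps Hsign.
  assert (Hd : 0 < d).
  { destruct (Hsign (eps / 2)) as [H1 H2]; [lra|].
    assert (0 < eps / 2 * d) by lra.
    apply (Rmult_lt_reg_l (eps / 2)); lra. }
  destruct (Req_dec c 0) as [Hc | Hc]; [assumption | exfalso].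
  set (t := Rmin (eps / 2) (Rabs c / (2 * d))).
  assert (Ht : 0 < t).
  { apply Rmin_pos; [lra|].
    apply Rdiv_lt_0_compat; [apply Rabs_pos_lt, Hc | lra]. }
  assert (Htd : t * d <= Rabs c / 2).
  { replace (Rabs c / 2) with (Rabs c / (2 * d) * d) by (field; lra).
    apply Rmult_le_compat_r; [lra | apply Rmin_r]. }
  assert (Hteps : t <= eps / 2) by apply Rmin_l.
  destruct (Hsign t) as [Hplus Hminus]; [lra|].
  unfold Rabs in Htd; destruct (Rcase_abs c); lra.
Qed.

Definition separates (w : weight) (K K' : coroot -> Prop) : Prop :=
  (forall y, K y -> 0 < pairing w y) /\ (forall y, K' y -> pairing w y < 0).

Lemma wall_separates i k j : (1 <= i <= k)%nat -> (k < j <= 4)%nat ->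
  separates (wall k) (chamberK i) (chamberK j).
Proof.
  intros Hik Hkj; nat_cases k; nat_cases i; nat_cases j;
    split; intros y Hy; solve_coords.
Qed.

Lemma separating_weight_vanishes w K K' p v eps : 0 < eps ->
  (forall t, 0 < t < eps -> K (vadd p v t) /\ K' (vadd p v (- t))) ->
  separates w K K' -> pairing w p = 0.
Proof.
  intros Heps Hpath [HK HK'].
  apply (linear_sign_change _ (pairing w v) eps Heps).
  intros t Ht; destruct (Hpath t Ht) as [Hplus Hminus].
  apply HK in Hplus; apply HK' in Hminus; rewrite pairing_vadd in Hplus, Hminus; lra.
Qed.

Lemma adjacent_via_sym w K K' : adjacent_via w K K' -> adjacent_via w K' K.
Proof.
  intros (p & v & Hp & Hw & Huniq & eps & Heps & Hpath).
  set (v' := Coroot (- psi1 v) (- phi1 v) (- phi2 v)).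
  assert (Hv' : forall t, vadd p v' t = vadd p v (- t))
    by (intros t; unfold vadd, v'; simpl; f_equal; ring).
  exists p, v'; split; [|split; [|split]]; try assumption.
  exists eps; split; [assumption|].
  intros t Ht; rewrite !Hv', Ropp_involutive; split; apply Hpath, Ht.
Qed.

Lemma adjacent_sym K K' : adjacent K K' -> adjacent K' K.
Proof.
  intros (w & Hw & Hadj); exists w; split; [|apply adjacent_via_sym]; assumption.
Qed.

Lemma adjacent_via_wneg w K K' : adjacent_via w K K' -> adjacent_via (wneg w) K K'.
Proof.
  intros (p & v & Hp & Hw & Huniq & Hpath).
  exists p, v; split; [|split; [|split]]; try assumption.
  - rewrite pairing_wneg, Hw; lra.
  - intros w' Hw' Hw'0; rewrite wneg_involutive.
    destruct (Huniq w' Hw' Hw'0); tauto.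
Qed.

Lemma adjacent_via_chamberK_irrefl i w : (1 <= i <= 4)%nat -> In w weights_2_7 ->
  ~ adjacent_via w (chamberK i) (chamberK i).
Proof.
  intros Hi Hw (p & v & _ & Hp & _ & eps & Heps & Hpath).
  destruct (Hpath (eps / 2)) as [Hplus Hminus]; [lra|].
  destruct (chamberK_sign_constant i w Hi Hw) as [Hs | Hs];
    pose proof (Hs _ Hplus); pose proof (Hs _ Hminus);
    rewrite !pairing_vadd, Hp, <- Ropp_mult_distr_l in *; lra.
Qed.

Lemma wall_adjacent_via k : (1 <= k <= 3)%nat ->
  adjacent_via (wall k) (chamberK k) (chamberK (S k)).
Proof.
  intros Hk.
  set (p := Coroot (match k with 1%nat => 4 | 2%nat => 3 | _ => 1 end) 4 7).
  assert (Hp : in_weyl p) by (unfold p; nat_cases k; solve_coords).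
  assert (Hwall : pairing (wall k) p = 0) by (unfold p; nat_cases k; solve_coords).
  exists p, (Coroot 1 0 0); split; [|split; [|split]]; try assumption.
  - intros w' Hw' Hw'0.
    destruct (weights_2_7_cases w' Hw') as [Hpos | [Hneg | (u & Hu & Hw'u)]].
    + specialize (Hpos p Hp); lra.
    + specialize (Hneg p Hp); lra.
    + assert (Hu0 : pairing u p = 0)
        by (destruct Hw'u as [<- | ->]; [|rewrite pairing_wneg in Hw'0]; lra).
      rewrite (relevant_vanishing_unique u (wall k) p Hp Hu (wall_relevant k) Hu0 Hwall)
        in Hw'u.
      assumption.
  - exists 1; split; [lra|].
    intros t Ht; unfold p; nat_cases k; split; solve_coords.
Qed.

Lemma wall_in_weights k : In (wall k) weights_2_7.
Proof. apply relevant_in_weights, wall_relevant. Qed.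

Lemma adjacent_chamberK_lt i j : (1 <= i)%nat -> (i < j <= 4)%nat ->
  adjacent (chamberK i) (chamberK j) -> j = S i.
Proof.
  intros Hi Hij (w & _ & p & v & Hp & _ & _ & eps & Heps & Hpath).
  destruct (Nat.eq_dec j (S i)) as [| Hne]; [assumption | exfalso].
  assert (H0 : pairing (wall i) p = 0).
  { apply (separating_weight_vanishes _ _ _ p v eps Heps Hpath), wall_separates; lia. }
  assert (H1 : pairing (wall (S i)) p = 0).
  { apply (separating_weight_vanishes _ _ _ p v eps Heps Hpath), wall_separates; lia. }
  pose proof (relevant_vanishing_unique _ _ p Hp
                (wall_relevant i) (wall_relevant (S i)) H0 H1) as Heq.
  nat_cases i; discriminate Heq.
Qed.

Lemma adjacent_chamberK_iff i j : (1 <= i <= 4)%nat -> (1 <= j <= 4)%nat ->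
  adjacent (chamberK i) (chamberK j) <-> j = S i \/ i = S j.
Proof.
  intros Hi Hj; split.
  - intros Hadj; destruct (lt_eq_lt_dec i j) as [[Hlt | <-] | Hgt].
    + left; apply adjacent_chamberK_lt; [lia | lia | assumption].
    + exfalso; destruct Hadj as (w & Hw & Hadj).
      exact (adjacent_via_chamberK_irrefl i w Hi Hw Hadj).
    + right; apply adjacent_chamberK_lt; [lia | lia | apply adjacent_sym, Hadj].
  - intros [-> | ->]; [| apply adjacent_sym]; eexists;
      (split; [apply wall_in_weights | apply wall_adjacent_via; lia]).
Qed.

Lemma adjacent_via_consecutive_iff k w : (1 <= k <= 3)%nat ->
  adjacent_via w (chamberK k) (chamberK (S k)) <-> w = wall k \/ w = wneg (wall k).
Proof.
  intros Hk; split.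
  - intros (p & v & Hp & Hw & Huniq & eps & Heps & Hpath).
    assert (Hwall : pairing (wall k) p = 0).
    { apply (separating_weight_vanishes _ _ _ p v eps Heps Hpath), wall_separates; lia. }
    destruct (Huniq (wall k) (wall_in_weights k) Hwall) as [<- | ->]; [left | right];
      rewrite ?wneg_involutive; reflexivity.
  - intros [-> | ->]; [| apply adjacent_via_wneg]; apply wall_adjacent_via, Hk.
Qed.

Theorem mainTheorem7 :
  (* exactly four chambers: the chambers are exactly K1,...,K4, pairwise distinct *)
  (forall S, is_chamber S <->
     exists i, (1 <= i <= 4)%nat /\ set_eq S (chamberK i)) /\
  (forall i j, (1 <= i <= 4)%nat -> (1 <= j <= 4)%nat ->
     set_eq (chamberK i) (chamberK j) -> i = j) /\
  (* sign vectors w.r.t. (varpi5, varpi6, varpi7) *)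
  (forall i x, (1 <= i <= 4)%nat -> chamberK i x ->
     let '(s5, s6, s7) := chamber_signs i in
     has_sign s5 (pairing varpi5 x) /\ has_sign s6 (pairing varpi6 x) /\
     has_sign s7 (pairing varpi7 x)) /\
  (* the adjacency graph is the chain 1 - 2 - 3 - 4 *)
  (forall i j, (1 <= i <= 4)%nat -> (1 <= j <= 4)%nat ->
     (adjacent (chamberK i) (chamberK j) <-> (j = S i \/ i = S j))) /\
  (* the wall between chamber i and i+1 is the hyperplane orthogonal to varpi_(8-i) *)
  (forall i w, (1 <= i <= 3)%nat -> In w weights_2_7 ->
     (adjacent_via w (chamberK i) (chamberK (S i)) <->
      (w = wall i \/ w = wneg (wall i)))).
Proof.
  split; [exact is_chamber_iff|].
  split.
  { intros i j Hi Hj Heq.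
    destruct (chamberK_inhabited i Hi) as [x Hx].
    exact (chamberK_disjoint i j x Hi Hj Hx (proj1 (Heq x) Hx)). }
  split; [intros i x Hi Hx; exact (proj2 (proj1 (chamberK_iff i x Hi) Hx))|].
  split; [exact adjacent_chamberK_iff|].
  intros i w Hi _; exact (adjacent_via_consecutive_iff i w Hi).
Qed.
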